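(* Let $L$ be a frame. The map $\nu(F)=\bigcap_{a\in F}\mathfrak o(a)$ restricts to an order isomorphism from $(\mathsf{Ex}(L),\sqsubseteq)$ onto $(\{\mathrm{fit}(S)\mid S\in\mathcal S_b(L)\},\subseteq)$, with inverse $S\mapsto\{a\in L\mid S\subseteq\mathfrak o(a)\}$.
   Context: A frame is a complete lattice $L$ with $(\bigvee A)\wedge b=\bigvee_{a\in A}(a\wedge b)$, Heyting implication $\to$. A sublocale is a subset $S\subseteq L$ closed under all meets with $a\to s\in S$ for $a\in L,s\in S$; the sublocales form a coframe $\mathsf{Sl}(L)$ under inclusion, with meets intersections and joins $\bigvee_i S_i=\{\bigwedge A\mid A\subseteq\bigcup_i S_i\}$. $\mathfrak o(a)=\{a\to b\mid b\in L\}$ (open sublocale), $\mathfrak c(a)={\uparrow}a$ (closed sublocale). $\mathrm{fit}(S)=\bigcap\{\mathfrak o(a)\mid S\subseteq\mathfrak o(a)\}$. A smooth sublocale is a join in $\mathsf{Sl}(L)$ of sublocales of the form $\mathfrak c(x)\cap\mathfrak o(y)$; $\mathcal S_b(L)$ is the set of smooth sublocales. Filters are nonempty up-closed subsets closed under finite meets, ordered by reverse inclusion $\sqsubseteq$. $\mathsf{Ex}(L)$ is the set of filters containing every exact meet of their subsets, where $\bigwedge M$ is exact if $(\bigwedge M)\vee b=\bigwedge_{a\in M}(a\vee b)$ for all $b$. *)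

Record frame := Frame {
  carrier :> Type;
  le : carrier -> carrier -> Prop;
  le_refl : forall a, le a a;
  le_trans : forall a b c, le a b -> le b c -> le a c;
  le_antisym : forall a b, le a b -> le b a -> a = b;
  sup : (carrier -> Prop) -> carrier;
  sup_ub : forall (A : carrier -> Prop) a, A a -> le a (sup A);
  sup_least : forall (A : carrier -> Prop) b,
      (forall a, A a -> le a b) -> le (sup A) b;
  meet : carrier -> carrier -> carrier;
  meet_lb1 : forall a b, le (meet a b) a;
  meet_lb2 : forall a b, le (meet a b) b;
  meet_glb : forall a b c, le c a -> le c b -> le c (meet a b);
  frame_distr : forall (A : carrier -> Prop) b,
      meet (sup A) b = sup (fun c => exists a, A a /\ c = meet a b)
}.

Arguments le {L} : rename.
Arguments sup {L} : rename.
Arguments meet {L} : rename.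

Section FrameDefs.
Variable L : frame.

Definition subset (A B : L -> Prop) : Prop := forall x, A x -> B x.
Definition seteq (A B : L -> Prop) : Prop := forall x, A x <-> B x.

Definition inf (A : L -> Prop) : L := sup (fun c => forall a, A a -> le c a).
Definition join (a b : L) : L := sup (fun c => c = a \/ c = b).
Definition imp (a b : L) : L := sup (fun c => le (meet c a) b).

Definition sublocale (S : L -> Prop) : Prop :=
  (forall A : L -> Prop, subset A S -> S (inf A)) /\
  (forall a s, S s -> S (imp a s)).

Definition sl_join {I : Type} (Si : I -> L -> Prop) : L -> Prop :=
  fun x => exists A : L -> Prop,
    subset A (fun y => exists i, Si i y) /\ x = inf A.

Definition opn (a : L) : L -> Prop := fun x => exists b, x = imp a b.
Definition cld (a : L) : L -> Prop := fun x => le a x.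

Definition fit (S : L -> Prop) : L -> Prop :=
  fun x => forall a, subset S (opn a) -> opn a x.

Definition smooth (S : L -> Prop) : Prop :=
  exists (I : Type) (xs ys : I -> L),
    seteq S (sl_join (fun i => fun z => cld (xs i) z /\ opn (ys i) z)).

Definition filter (F : L -> Prop) : Prop :=
  (exists a, F a) /\
  (forall a b, F a -> le a b -> F b) /\
  (forall a b, F a -> F b -> F (meet a b)).

Definition filter_le (F G : L -> Prop) : Prop := subset G F.

Definition exact_meet (M : L -> Prop) : Prop :=
  forall b, join (inf M) b = inf (fun c => exists a, M a /\ c = join a b).

Definition exact_filter (F : L -> Prop) : Prop :=
  filter F /\ forall M : L -> Prop, subset M F -> exact_meet M -> F (inf M).

Definition nu (F : L -> Prop) : L -> Prop :=
  fun x => forall a, F a -> opn a x.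

Definition nu_inv (S : L -> Prop) : L -> Prop :=
  fun a => subset S (opn a).

End FrameDefs.

(* For a join S of sublocales c(x_i) ∩ o(y_i) one has S ⊆ o(a) iff y_i ≤ a ∨ x_i
   for every i, so {a | S ⊆ o(a)} is an intersection of the exact filters
   {a | y ≤ a ∨ x}.  Conversely an exact filter F is recovered as such an
   intersection by taking, for every x, y_x := ⋀{a ∨ x | a ∈ F}: if y_x ≤ b ∨ x
   for all x, then b is the exact meet of {a ∨ b | a ∈ F} ⊆ F.  Everything else
   is the Galois connection between nu and nu_inv. *)

From Stdlib Require Import Setoid.

Section FrameLemmas.
Variable L : frame.

Local Notation "a <== b" := (@le L a b) (at level 70).
Local Notation "a ⊓ b" := (meet a b) (at level 40, left associativity).
Local Notation "a ⊔ b" := (join L a b) (at level 50, left associativity).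

Definition top : L := sup (fun _ => True).

Lemma le_top (a : L) : a <== top.
Proof. apply sup_ub; exact I. Qed.

Lemma meet_mono (a a' b b' : L) : a <== a' -> b <== b' -> a ⊓ b <== a' ⊓ b'.
Proof.
  intros Ha Hb; apply meet_glb.
  - eapply le_trans; [apply meet_lb1 | exact Ha].
  - eapply le_trans; [apply meet_lb2 | exact Hb].
Qed.

Lemma meet_comm_le (a b : L) : a ⊓ b <== b ⊓ a.
Proof. apply meet_glb; [apply meet_lb2 | apply meet_lb1]. Qed.

Lemma inf_lb (A : L -> Prop) (a : L) : A a -> inf L A <== a.
Proof. intros Ha; apply sup_least; intros c Hc; exact (Hc a Ha). Qed.

Lemma inf_glb (A : L -> Prop) (c : L) : (forall a, A a -> c <== a) -> c <== inf L A.
Proof. intros H; apply sup_ub; exact H. Qed.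

Lemma inf_single (a : L) : inf L (fun z => z = a) = a.
Proof.
  apply le_antisym.
  - apply inf_lb; reflexivity.
  - apply inf_glb; intros z ->; apply le_refl.
Qed.

Lemma join_ub1 (a b : L) : a <== a ⊔ b.
Proof. apply sup_ub; left; reflexivity. Qed.

Lemma join_ub2 (a b : L) : b <== a ⊔ b.
Proof. apply sup_ub; right; reflexivity. Qed.

Lemma join_least (a b c : L) : a <== c -> b <== c -> a ⊔ b <== c.
Proof. intros Ha Hb; apply sup_least; intros d [-> | ->]; assumption. Qed.

Lemma join_mono (a a' b b' : L) : a <== a' -> b <== b' -> a ⊔ b <== a' ⊔ b'.
Proof.
  intros Ha Hb; apply join_least.
  - eapply le_trans; [exact Ha | apply join_ub1].
  - eapply le_trans; [exact Hb | apply join_ub2].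
Qed.

Lemma meet_joinr_le (u p q r : L) : u ⊓ p <== r -> u ⊓ q <== r -> u ⊓ (p ⊔ q) <== r.
Proof.
  intros Hp Hq; eapply le_trans; [apply meet_comm_le |].
  unfold join; rewrite frame_distr; apply sup_least.
  intros d [e [[-> | ->] ->]]; (eapply le_trans; [apply meet_comm_le | assumption]).
Qed.

Lemma join_meet_distr_le (a b x : L) : (a ⊔ x) ⊓ (b ⊔ x) <== (a ⊓ b) ⊔ x.
Proof.
  apply meet_joinr_le; [| eapply le_trans; [apply meet_lb2 | apply join_ub2]].
  eapply le_trans; [apply meet_comm_le |]; apply meet_joinr_le.
  - eapply le_trans; [apply meet_comm_le | apply join_ub1].
  - eapply le_trans; [apply meet_lb2 | apply join_ub2].
Qed.

Lemma imp_adj (a b c : L) : c <== imp L a b <-> c ⊓ a <== b.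
Proof.
  split; [| intros H; apply sup_ub; exact H].
  intros H; eapply le_trans; [apply meet_mono; [exact H | apply le_refl] |].
  unfold imp; rewrite frame_distr; apply sup_least.
  intros d [e [He ->]]; exact He.
Qed.

Lemma imp_top (a b : L) : a <== b -> imp L a b = top.
Proof.
  intros H; apply le_antisym; [apply le_top |].
  apply imp_adj; eapply le_trans; [apply meet_lb2 | exact H].
Qed.

Lemma opnE (a x : L) : opn L a x <-> imp L a x = x.
Proof.
  split; [| intros H; exists x; symmetry; exact H].
  intros [b ->]; apply le_antisym.
  - apply imp_adj; apply (le_trans _ _ (imp L a b ⊓ a)); [| apply imp_adj, le_refl].
    apply meet_glb; [apply (proj1 (imp_adj _ _ _)), le_refl | apply meet_lb2].
  - apply imp_adj; apply meet_lb1.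
Qed.

Lemma opn_inf (a : L) (A : L -> Prop) : subset L A (opn L a) -> opn L a (inf L A).
Proof.
  intros HA; apply opnE; apply le_antisym; [| apply imp_adj, meet_lb1].
  apply inf_glb; intros w Aw.
  rewrite <- (proj1 (opnE a w) (HA w Aw)); apply imp_adj.
  apply (le_trans _ _ (inf L A)); [apply (proj1 (imp_adj _ _ _)), le_refl | apply inf_lb, Aw].
Qed.

Lemma sl_join_subset_opn {I : Type} (Si : I -> L -> Prop) (a : L) :
  subset L (sl_join L Si) (opn L a) <-> forall i, subset L (Si i) (opn L a).
Proof.
  split.
  - intros H i z Hz; rewrite <- inf_single; apply H.
    exists (fun w => w = z); split; [intros w ->; exists i; exact Hz | reflexivity].
  - intros H z [A [HA ->]]; apply opn_inf.
    intros w Aw; destruct (HA w Aw) as [i Hw]; exact (H i w Hw).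
Qed.

Lemma cld_opn_subset_opn (x y a : L) :
  subset L (fun z => cld L x z /\ opn L y z) (opn L a) <-> y <== a ⊔ x.
Proof.
  split.
  - intros H; set (s := imp L y (a ⊔ x)).
    assert (Hs : cld L x s /\ opn L y s).
    { split; [| exists (a ⊔ x); reflexivity].
      apply imp_adj; eapply le_trans; [apply meet_lb1 | apply join_ub2]. }
    assert (Es : s = top).
    { rewrite <- (proj1 (opnE a s) (H s Hs)); apply imp_top.
      apply imp_adj; eapply le_trans; [apply meet_lb1 | apply join_ub1]. }
    assert (Htop : top <== s) by (rewrite Es; apply le_refl).
    apply imp_adj in Htop; eapply le_trans; [| exact Htop].
    apply meet_glb; [apply le_top | apply le_refl].
  - intros Hy w [Hxw Hyw]; pose proof (proj1 (opnE y w) Hyw) as Ew.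
    apply opnE; apply le_antisym; [| apply imp_adj, meet_lb1].
    apply (le_trans _ _ (imp L y w)); [| rewrite Ew; apply le_refl].
    apply imp_adj; eapply le_trans; [apply meet_mono; [apply le_refl | exact Hy] |].
    apply meet_joinr_le.
    + apply (proj1 (imp_adj _ _ _)), le_refl.
    + eapply le_trans; [apply meet_lb2 | exact Hxw].
Qed.

Definition smooth_gen {I : Type} (xs ys : I -> L) : L -> Prop :=
  sl_join L (fun i z => cld L (xs i) z /\ opn L (ys i) z).

Lemma nu_inv_smooth_gen {I : Type} (xs ys : I -> L) (a : L) :
  nu_inv L (smooth_gen xs ys) a <-> forall i, ys i <== a ⊔ xs i.
Proof.
  unfold nu_inv, smooth_gen; rewrite sl_join_subset_opn; split;
    intros H i; apply cld_opn_subset_opn, H.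
Qed.

Lemma exact_filter_seteq (F G : L -> Prop) :
  seteq L F G -> exact_filter L G -> exact_filter L F.
Proof.
  intros E [[[a Ga] [Hup Hmeet]] Hex]; split; [split; [| split] |].
  - exists a; apply E, Ga.
  - intros x y Fx Hxy; apply E; apply (Hup x); [apply E, Fx | exact Hxy].
  - intros x y Fx Fy; apply E; apply Hmeet; apply E; assumption.
  - intros M HM HE; apply E; apply Hex; [intros x Mx; apply E, HM, Mx | exact HE].
Qed.

Lemma exact_filter_below_join {I : Type} (xs ys : I -> L) :
  exact_filter L (fun a => forall i, ys i <== a ⊔ xs i).
Proof.
  split; [split; [| split] |].
  - exists top; intros i; eapply le_trans; [apply le_top | apply join_ub1].
  - intros a b Ha Hab i; eapply le_trans; [apply Ha | apply join_mono, le_refl; exact Hab].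
  - intros a b Ha Hb i; eapply le_trans; [apply meet_glb; [apply Ha | apply Hb] |].
    apply join_meet_distr_le.
  - intros M HM HE i; rewrite (HE (xs i)); apply inf_glb.
    intros c [m [Mm ->]]; apply HM, Mm.
Qed.

Definition filter_gap (F : L -> Prop) (x : L) : L :=
  inf L (fun c => exists a, F a /\ c = a ⊔ x).

Lemma exact_filterE (F : L -> Prop) : exact_filter L F ->
  forall b, F b <-> forall x, filter_gap F x <== b ⊔ x.
Proof.
  intros [[_ [Hup _]] Hex] b; split.
  - intros Fb x; apply inf_lb; exists b; split; [exact Fb | reflexivity].
  - intros H; set (M := fun c => exists a, F a /\ c = a ⊔ b).
    assert (EM : inf L M = b).
    { apply le_antisym.
      - eapply le_trans; [apply (H b) | apply join_least; apply le_refl].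
      - apply inf_glb; intros c [a [_ ->]]; apply join_ub2. }
    rewrite <- EM; apply Hex.
    + intros c [a [Fa ->]]; apply (Hup a); [exact Fa | apply join_ub1].
    + intros x; rewrite EM; apply le_antisym.
      * apply inf_glb; intros c [m [[a [_ ->]] ->]].
        apply join_mono; [apply join_ub2 | apply le_refl].
      * eapply le_trans; [| eapply le_trans; [apply (H (b ⊔ x)) |]].
        -- apply inf_glb; intros c [a [Fa ->]].
           eapply le_trans; [apply inf_lb; exists (a ⊔ b); split;
                             [exists a; split; [exact Fa | reflexivity] | reflexivity] |].
           apply join_least; [apply join_mono, join_ub1; apply le_refl |].
           eapply le_trans; [apply join_ub2 | apply join_ub2].
        -- apply join_least; [apply join_ub1 | apply le_refl].
Qed.

Lemma nu_inv_smooth_gen_gap (F : L -> Prop) : exact_filter L F ->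
  seteq L (nu_inv L (smooth_gen (fun x : L => x) (filter_gap F))) F.
Proof.
  intros HF b; rewrite nu_inv_smooth_gen; symmetry; exact (exact_filterE F HF b).
Qed.

Lemma nu_inv_fit (S : L -> Prop) : seteq L (nu_inv L (fit L S)) (nu_inv L S).
Proof.
  intros a; split.
  - intros H x Sx; apply H; intros b Hb; apply Hb, Sx.
  - intros H x Fx; apply Fx, H.
Qed.

Lemma nu_seteq (F G : L -> Prop) : seteq L F G -> seteq L (nu L F) (nu L G).
Proof. intros E x; split; intros H a Ha; apply H, E, Ha. Qed.

Lemma nu_inv_seteq (S T : L -> Prop) : seteq L S T -> seteq L (nu_inv L S) (nu_inv L T).
Proof. intros E a; split; intros H x Hx; apply H, E, Hx. Qed.

Lemma nu_nu_inv (S : L -> Prop) : nu L (nu_inv L S) = fit L S.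
Proof. reflexivity. Qed.

Lemma subset_nu_inv_nu (F : L -> Prop) : subset L F (nu_inv L (nu L F)).
Proof. intros a Fa x Hx; exact (Hx a Fa). Qed.

Lemma nu_antitone (F G : L -> Prop) : subset L G F -> subset L (nu L F) (nu L G).
Proof. intros H x Hx a Ga; exact (Hx a (H a Ga)). Qed.

Lemma nu_inv_antitone (S T : L -> Prop) : subset L S T -> subset L (nu_inv L T) (nu_inv L S).
Proof. intros H a Ha x Sx; exact (Ha x (H x Sx)). Qed.

Lemma nu_exact_fit (F : L -> Prop) : exact_filter L F ->
  seteq L (nu L F) (fit L (smooth_gen (fun x : L => x) (filter_gap F))).
Proof.
  intros HF; rewrite <- nu_nu_inv; apply nu_seteq.
  intros a; symmetry; exact (nu_inv_smooth_gen_gap F HF a).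
Qed.

End FrameLemmas.

Theorem mainTheorem12 (L : frame) :
  (forall F : L -> Prop, exact_filter L F ->
     exists S : L -> Prop, smooth L S /\ seteq L (nu L F) (fit L S)) /\
  (forall S : L -> Prop, smooth L S -> exact_filter L (nu_inv L (fit L S))) /\
  (forall F : L -> Prop, exact_filter L F -> seteq L (nu_inv L (nu L F)) F) /\
  (forall S : L -> Prop, smooth L S ->
     seteq L (nu L (nu_inv L (fit L S))) (fit L S)) /\
  (forall F G : L -> Prop, exact_filter L F -> exact_filter L G ->
     (filter_le L F G <-> subset L (nu L F) (nu L G))).
Proof.
  assert (Hinv : forall F, exact_filter L F -> seteq L (nu_inv L (nu L F)) F).
  { intros F HF a.
    exact (iff_trans (nu_inv_seteq L _ _ (nu_exact_fit L F HF) a)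
             (iff_trans (nu_inv_fit L _ a) (nu_inv_smooth_gen_gap L F HF a))). }
  split; [| split; [| split; [| split]]].
  - intros F HF; exists (smooth_gen L (fun x : L => x) (filter_gap L F)); split.
    + exists L, (fun x : L => x), (filter_gap L F); intros x; reflexivity.
    + exact (nu_exact_fit L F HF).
  - intros S [I [xs [ys HS]]].
    apply (exact_filter_seteq L _ _ (fun a => iff_trans (nu_inv_fit L S a)
             (iff_trans (nu_inv_seteq L _ _ HS a) (nu_inv_smooth_gen L xs ys a)))).
    apply exact_filter_below_join.
  - exact Hinv.
  - intros S _; rewrite <- nu_nu_inv; apply nu_seteq, nu_inv_fit.
  - intros F G HF _; split; [apply nu_antitone |].
    intros Hs a Ga; apply Hinv; [exact HF |].
    exact (nu_inv_antitone L _ _ Hs a (subset_nu_inv_nu L G a Ga)).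
Qed.
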